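(* Let $\{F_n\}$ be the Fibonacci sequence, $F_0=0$, $F_1=1$, $F_{n+2}=F_{n+1}+F_n$. Then \[ \{F_n\}=\sum_{k=0}^{\infty} I_0^{\,k+1}\{a_n[x^k/k!]\}_L , \] where the sum is taken termwise (for each index only finitely many summands are nonzero).
   Context: Sequences are indexed by $n=0,1,2,\dots$; sums of sequences are termwise. The insertion operator is $I_0\{a_n\}=0,a_0,a_1,a_2,\dots$, and $I_0^{j}$ denotes $j$-fold application. The left integral is $\mathcal{I}_L^0\{a_n\}=\{\sum_{k=0}^{n-1}a_k\}$ (empty sum $=0$). Define $\{a_n[x^0/0!]\}_L=\{1\}=1,1,1,\dots$, $\{a_n[x^1/1!]\}_L=\{n\}=0,1,2,\dots$, and for $k\ge 2$, $\{a_n[x^k/k!]\}_L=(\mathcal{I}_L^0)^{k-1}\{n\}$ (the $(k-1)$-fold left integral of $0,1,2,\dots$). *)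

From mathcomp Require Import all_boot.
Set Implicit Arguments. Unset Strict Implicit. Unset Printing Implicit Defensive.

Definition sequence := nat -> nat.

Fixpoint fib (n : nat) : nat :=
  match n with
  | 0 => 0
  | 1 => 1
  | (m.+1 as p).+1 => fib p + fib m
  end.

Definition I0 (a : sequence) : sequence :=
  fun n => match n with 0 => 0 | m.+1 => a m end.

Definition IL (a : sequence) : sequence := fun n => \sum_(k < n) a k.

(* {a_n[x^k/k!]}_L *)
Definition aL (k : nat) : sequence :=
  match k with
  | 0 => fun _ => 1
  | j.+1 => iter j IL (fun n => n)
  end.

Definition summand (k : nat) : sequence := iter k.+1 I0 (aL k).

(* Iterating the left integral on 0, 1, 2, ... climbs Pascal's triangle
   (hockey-stick identity), so {a_n[x^k/k!]}_L is n |-> C(n, k) and the k-th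
   summand is n |-> C(n - k - 1, k) for n > k, and 0 below.  The theorem is
   then the classical fact that F_(n+1) is the n-th shallow diagonal sum of
   Pascal's triangle, whose Fibonacci recurrence follows from Pascal's rule. *)
From mathcomp Require Import all_boot.

Lemma iter_I0E m a n : iter m I0 a n = if m <= n then a (n - m) else 0.
Proof.
elim: m n => [|m IHm] n /=; first by rewrite subn0.
by case: n => [|n] //=; rewrite IHm subSS.
Qed.

Lemma sum_bin_hockey m n : \sum_(k < n) 'C(k, m) = 'C(n, m.+1).
Proof.
elim: n => [|n IHn]; first by rewrite big_ord0.
by rewrite big_ord_recr /= IHn binS addnC.
Qed.

Lemma aLE k n : aL k n = 'C(n, k).
Proof.
case: k => [|j] /=; first by rewrite bin0.
elim: j n => [|j IHj] n /=; first by rewrite bin1.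
rewrite /IL -sum_bin_hockey; apply: eq_bigr => i _; exact: IHj.
Qed.

Lemma summandE k n : summand k n = if k < n then 'C(n - k.+1, k) else 0.
Proof. by rewrite /summand iter_I0E aLE. Qed.

Definition diag_sum n := \sum_(k < n.+1) 'C(n - k, k).

Lemma diag_sumS n : diag_sum n.+1 = \sum_(k < n.+1) 'C(n - k, k.+1) + 1.
Proof. by rewrite /diag_sum big_ord_recl subn0 bin0 addnC. Qed.

Lemma diag_sumSS n : diag_sum n.+2 = diag_sum n.+1 + diag_sum n.
Proof.
rewrite !diag_sumS big_ord_recr /= subnn bin0n addn0 addnAC.
congr (_ + 1); rewrite /diag_sum -big_split /=.
by apply: eq_bigr => -[k /= lt_k_n1] _; rewrite subSn // binS.
Qed.

Lemma eq_fibS (u : nat -> nat) :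
  u 0 = 1 -> u 1 = 1 -> (forall n, u n.+2 = u n.+1 + u n) ->
  forall n, u n = fib n.+1.
Proof.
move=> u0 u1 uSS n; suff: u n = fib n.+1 /\ u n.+1 = fib n.+2 by case.
elim: n => [|n [IHn IHn1]] //; split=> //.
by rewrite uSS IHn1 IHn.
Qed.

Lemma fib_diag_sum n : fib n.+1 = diag_sum n.
Proof.
symmetry; apply: eq_fibS => [||m]; last exact: diag_sumSS.
  by rewrite /diag_sum big_ord1.
by rewrite /diag_sum !big_ord_recr big_ord0.
Qed.

Theorem mainTheorem3 :
  forall n : nat,
    (forall k : nat, n <= k -> summand k n = 0) /\
    fib n = \sum_(k < n) summand k n.
Proof.
move=> n; split=> [k le_n_k|]; first by rewrite summandE ltnNge le_n_k.
case: n => [|n]; first by rewrite big_ord0.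
rewrite fib_diag_sum; apply: eq_bigr => -[k /= lt_k_n1] _.
by rewrite summandE lt_k_n1 subSS.
Qed.
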